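(* Let $f:[0,1]^n \to \mathbb{R}_+$ be a differentiable DR-submodular function and $\vec{x}^* \in [0,1]^n$ a maximizer of $f$. Consider a differentiable trajectory $(\vec{x}^{(t)},\vec{y}^{(t)})$ with $\vec{x}^{(t)} \le \vec{y}^{(t)}$ satisfying $\dot{\vec{x}}^{(t)} = \nabla f(\vec{x}^{(t)})^+$ and $\dot{\vec{y}}^{(t)} = \nabla f(\vec{y}^{(t)})^-$. Let $\vec{p}^{(t)}$ be the projection of $\vec{x}^*$ onto the box $[\vec{x}^{(t)},\vec{y}^{(t)}]$, i.e. $p^{(t)}_i = \min\{\max\{x^*_i, x^{(t)}_i\}, y^{(t)}_i\}$. Then at every time $t$ (where the derivatives exist) $$\frac12\left(\langle \nabla f(\vec{x}^{(t)}), \dot{\vec{x}}^{(t)}\rangle + \langle \nabla f(\vec{y}^{(t)}), \dot{\vec{y}}^{(t)}\rangle\right) + \langle \nabla f(\vec{p}^{(t)}), \dot{\vec{p}}^{(t)}\rangle \ge 0.$$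
   Context: For a vector $\vec{v}$, $\vec{v}^+$ denotes the vector with entries $\max\{v_i,0\}$ and $\vec{v}^-$ the vector with entries $\min\{v_i,0\}$. A function $f:[0,1]^n \to \mathbb{R}_+$ is DR-submodular if for all $\vec{x}\le\vec{y}$ in $[0,1]^n$ (coordinate-wise), all $i\in[n]$ and $\delta\in[0,1]$ with $\vec{x}+\delta\vec{1}_{\{i\}}, \vec{y}+\delta\vec{1}_{\{i\}} \in [0,1]^n$, $f(\vec{x}+\delta\vec{1}_{\{i\}})-f(\vec{x}) \ge f(\vec{y}+\delta\vec{1}_{\{i\}})-f(\vec{y})$; for differentiable $f$ this is equivalent to $\nabla f(\vec{x}) \ge \nabla f(\vec{y})$ whenever $\vec{x}\le\vec{y}$. Dots denote time derivatives. *)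

From HB Require Import structures.
From mathcomp Require Import all_boot all_order all_algebra.
From mathcomp Require Import all_classical all_reals all_analysis.
Set Implicit Arguments. Unset Strict Implicit. Unset Printing Implicit Defensive.
Import Order.TTheory GRing.Theory Num.Theory.
Import numFieldNormedType.Exports.
Local Open Scope ring_scope.

Section Defs.
Variables (R : realType) (n : nat).
Notation vec := 'rV[R]_n.

Definition in_cube (x : vec) : Prop := forall i, 0 <= x 0 i <= 1.

Definition vle (x y : vec) : Prop := forall i, x 0 i <= y 0 i.

Definition unitv (i : 'I_n) : vec := delta_mx 0 i.

Definition DR_submodular (f : vec -> R) : Prop :=
  forall (x y : vec) (i : 'I_n) (d : R),
    in_cube x -> in_cube y -> vle x y -> 0 <= d <= 1 ->
    in_cube (x + d *: unitv i) -> in_cube (y + d *: unitv i) ->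
    f (y + d *: unitv i) - f y <= f (x + d *: unitv i) - f x.

Definition grad (f : vec -> R) (x : vec) : vec :=
  \row_i derive f x (unitv i).

Definition vpos (v : vec) : vec := \row_i Num.max (v 0 i) 0.
Definition vneg (v : vec) : vec := \row_i Num.min (v 0 i) 0.

Definition inner (u v : vec) : R := \sum_i u 0 i * v 0 i.

Definition box_proj (xs x y : vec) : vec :=
  \row_i Num.min (Num.max (xs 0 i) (x 0 i)) (y 0 i).

End Defs.

From HB Require Import structures.
From mathcomp Require Import all_boot all_order all_algebra.
From mathcomp Require Import all_classical all_reals all_analysis.
From mathcomp Require Import lra.
Import Order.TTheory GRing.Theory Num.Theory.
Import numFieldNormedType.Exports.
Set Implicit Arguments. Unset Strict Implicit. Unset Printing Implicit Defensive.
Local Open Scope ring_scope.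
Local Open Scope classical_set_scope.

(* DR-submodularity makes the gradient antitone, so grad f y <= grad f p <= grad f x
   coordinatewise, because x <= p <= y.  Each coordinate p_i = clamp(x*_i, x_i, y_i) is
   monotone and 1-Lipschitz in x_i and in y_i, hence dy_i/dt <= dp_i/dt <= dx_i/dt since
   dx_i/dt >= 0 >= dy_i/dt.  With a = dx_i/dt = (d_i f(x))^+ and b = dy_i/dt = (d_i f(y))^-,
   both d_i f(p) and dp_i/dt lie in [b, a], an interval containing 0, so their product is at
   least ab and the i-th summand is at least (a^2 + b^2)/2 + ab = (a + b)^2/2 >= 0. *)

Section Clamp.
Variable R : realFieldType.
Implicit Types c lo hi : R.

Definition clamp c lo hi := Num.min (Num.max c lo) hi.

Lemma clamp_ge c lo hi : lo <= hi -> lo <= clamp c lo hi.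
Proof. by move=> lohi; rewrite /clamp le_min le_max lexx orbT. Qed.

Lemma clamp_le c lo hi : clamp c lo hi <= hi.
Proof. by rewrite /clamp ge_min lexx orbT. Qed.

Lemma clamp_incr_lo c lo lo1 hi : clamp c lo1 hi - clamp c lo hi <= Num.max (lo1 - lo) 0.
Proof.
rewrite /clamp /Num.max /Num.min; case: (ltP c lo); case: (ltP c lo1) => *.
all: by repeat (case: ifPn; rewrite -?leNgt -?ltNge => ?); lra.
Qed.

Lemma clamp_incr_hi c lo hi hi1 : clamp c lo hi1 - clamp c lo hi <= Num.max (hi1 - hi) 0.
Proof.
rewrite /clamp /Num.max /Num.min; case: (ltP c lo) => *.
all: by repeat (case: ifPn; rewrite -?leNgt -?ltNge => ?); lra.
Qed.

Lemma clamp_incr_le c lo hi lo1 hi1 :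
  clamp c lo1 hi1 - clamp c lo hi <= Num.max (lo1 - lo) 0 + Num.max (hi1 - hi) 0.
Proof.
rewrite -(subrKA (clamp c lo hi1)).
exact: lerD (clamp_incr_lo _ _ _ _) (clamp_incr_hi _ _ _ _).
Qed.

Lemma clamp_incr_ge c lo hi lo1 hi1 :
  Num.min (lo1 - lo) 0 + Num.min (hi1 - hi) 0 <= clamp c lo1 hi1 - clamp c lo hi.
Proof.
have := clamp_incr_le c lo1 hi1 lo hi; rewrite /Num.max /Num.min.
by repeat (case: ifPn; rewrite -?leNgt -?ltNge => ?); lra.
Qed.

End Clamp.

Section OneSidedQuotients.
Variables (R : realFieldType) (V : normedModType R).

Lemma derive_right_quotient (f : V -> R) z v : derivable f z v ->
  (fun d => d^-1 * (f (z + d *: v) - f z)) @ 0^'+ --> 'D_v f z.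
Proof.
move=> df; apply: cvg_dnbhs_at_right; apply: cvg_trans df.
by apply: near_eq_cvg; near=> d; rewrite /= [_ + z]addrC.
Unshelve. all: end_near. Qed.

Lemma derive_left_quotient (f : V -> R) z v : differentiable f z ->
  (fun d => d^-1 * (f z - f (z - d *: v))) @ 0^'+ --> 'D_v f z.
Proof.
move=> df; have := derive_right_quotient (diff_derivable (v := - v) df).
rewrite !deriveE // linearN => /cvgN; rewrite opprK; apply: cvg_trans.
by apply: near_eq_cvg; near=> d; rewrite fctE scalerN -mulrN opprB.
Unshelve. all: end_near. Qed.

End OneSidedQuotients.

Section MaxMinLimits.
Context {R : realFieldType} {T : Type} {F : set_system T} {FF : Filter F}.
Implicit Types f g : T -> R.

Lemma cvg_maxr f g a b : f @ F --> a -> g @ F --> b ->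
  (fun x => Num.max (f x) (g x)) @ F --> Num.max a b.
Proof.
move=> fa gb; rewrite maxr_absE; under eq_fun do rewrite maxr_absE.
exact: cvgMr_tmp (cvgD (cvgD fa gb) (cvg_norm (cvgB fa gb))).
Qed.

Lemma cvg_minr f g a b : f @ F --> a -> g @ F --> b ->
  (fun x => Num.min (f x) (g x)) @ F --> Num.min a b.
Proof.
move=> fa gb; rewrite minr_absE; under eq_fun do rewrite minr_absE.
exact: cvgMr_tmp (cvgB (cvgD fa gb) (cvg_norm (cvgB fa gb))).
Qed.

End MaxMinLimits.

Section ClampDerivative.
Variable R : realFieldType.
Implicit Types (c t : R) (X Y : R -> R).

Lemma derive1_right_quotient (g : R -> R) t : derivable g t 1 ->
  (fun h => h^-1 * (g (t + h) - g t)) @ 0^'+ --> g^`() t.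
Proof.
move=> dg; rewrite derive1E; have := derive_right_quotient dg.
by under eq_fun => h do rewrite [h *: 1]mulr1.
Qed.

Lemma derive1_clamp_le c X Y t :
  derivable X t 1 -> derivable Y t 1 -> derivable (fun s => clamp c (X s) (Y s)) t 1 ->
  (fun s => clamp c (X s) (Y s))^`() t <= Num.max (X^`() t) 0 + Num.max (Y^`() t) 0.
Proof.
move=> dX dY dP.
have maxr0_quotient g : derivable g t 1 ->
    (fun h => Num.max (h^-1 * (g (t + h) - g t)) 0) @ 0^'+ --> Num.max (g^`() t) 0.
  by move=> dg; exact: cvg_maxr (derive1_right_quotient dg) (cvg_cst _).
apply: ler_cvg_to (derive1_right_quotient dP) (cvgD (maxr0_quotient _ dX) (maxr0_quotient _ dY)) _.
near=> h; have h0 : 0 <= h^-1 by rewrite invr_ge0 ltW //; near: h; exact: nbhs_right_gt.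
apply: le_trans (ler_wpM2l h0 (clamp_incr_le _ _ _ _ _)) _.
by rewrite fctE mulrDr !maxr_pMr ?mulr0.
Unshelve. all: end_near. Qed.

Lemma derive1_clamp_ge c X Y t :
  derivable X t 1 -> derivable Y t 1 -> derivable (fun s => clamp c (X s) (Y s)) t 1 ->
  Num.min (X^`() t) 0 + Num.min (Y^`() t) 0 <= (fun s => clamp c (X s) (Y s))^`() t.
Proof.
move=> dX dY dP.
have minr0_quotient g : derivable g t 1 ->
    (fun h => Num.min (h^-1 * (g (t + h) - g t)) 0) @ 0^'+ --> Num.min (g^`() t) 0.
  by move=> dg; exact: cvg_minr (derive1_right_quotient dg) (cvg_cst _).
apply: ler_cvg_to (cvgD (minr0_quotient _ dX) (minr0_quotient _ dY)) (derive1_right_quotient dP) _.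
near=> h; have h0 : 0 <= h^-1 by rewrite invr_ge0 ltW //; near: h; exact: nbhs_right_gt.
apply: le_trans (ler_wpM2l h0 (clamp_incr_ge _ _ _ _ _)).
by rewrite fctE [in leRHS]mulrDr !minr_pMr ?mulr0.
Unshelve. all: end_near. Qed.

End ClampDerivative.

Section CubeOrder.
Variables (R : realType) (n : nat).
Implicit Types (u v x y z : 'rV[R]_n).

Lemma in_cube_vle_between x y z : in_cube x -> in_cube y -> vle x z -> vle z y -> in_cube z.
Proof.
move=> hx hy xz zy i; have /andP[x0 _] := hx i; have /andP[_ y1] := hy i.
by rewrite (le_trans x0 (xz i)) (le_trans (zy i) y1).
Qed.

Lemma add_unitvE z i j c :
  (z + c *: unitv R i) 0 j = if j == i then z 0 j + c else z 0 j.
Proof.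
by rewrite /unitv !mxE eqxx /=; case: eqVneq => [->|_]; rewrite ?mulr1 ?mulr0 ?addr0.
Qed.

Lemma in_cube_add_unitv z i c : in_cube z -> 0 <= z 0 i + c <= 1 -> in_cube (z + c *: unitv R i).
Proof. by move=> hz hc j; rewrite add_unitvE; case: eqP => [->|_]. Qed.

Lemma vle_add_unitv u v i c : vle u v -> u 0 i <= v 0 i + c -> vle u (v + c *: unitv R i).
Proof. by move=> uv hc j; rewrite add_unitvE; case: eqP => [->|_]. Qed.

Lemma vle_add_unitv2 u v i c : vle u v -> vle (u + c *: unitv R i) (v + c *: unitv R i).
Proof. by move=> uv j; rewrite !add_unitvE; case: eqP => [->|_]; rewrite ?lerD2r. Qed.

End CubeOrder.

Section BoxProjection.
Variables (R : realType) (n : nat).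
Implicit Types (xs x y : 'rV[R]_n) (X Y : R -> 'rV[R]_n).

Lemma box_projE xs x y i : box_proj xs x y 0 i = clamp (xs 0 i) (x 0 i) (y 0 i).
Proof. by rewrite mxE. Qed.

Lemma vle_box_proj_l xs x y : vle x y -> vle x (box_proj xs x y).
Proof. by move=> xy i; rewrite box_projE clamp_ge. Qed.

Lemma vle_box_proj_r xs x y : vle (box_proj xs x y) y.
Proof. by move=> i; rewrite box_projE clamp_le. Qed.

Lemma derive1_coord X t i : derivable X t 1 ->
  derivable (fun s => X s 0 i) t 1 /\ X^`() t 0 i = (fun s => X s 0 i)^`() t.
Proof.
move=> dX; split; first by move/derivable_mxP: dX; apply.
by rewrite !derive1E derive_mx // mxE.
Qed.

Lemma derive1_box_proj_between xs X Y t i :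
  derivable X t 1 -> derivable Y t 1 -> derivable (fun s => box_proj xs (X s) (Y s)) t 1 ->
  0 <= X^`() t 0 i -> Y^`() t 0 i <= 0 ->
  Y^`() t 0 i <= (fun s => box_proj xs (X s) (Y s))^`() t 0 i <= X^`() t 0 i.
Proof.
move=> /(derive1_coord i) [dX ->] /(derive1_coord i) [dY ->] /(derive1_coord i) [].
under eq_fun do rewrite box_projE; move=> dP -> X0 Y0.
apply/andP; split.
- have := derive1_clamp_ge dX dY dP.
  by rewrite (min_r X0) (min_l Y0) add0r.
- have := derive1_clamp_le dX dY dP.
  by rewrite (max_l X0) (max_r Y0) addr0.
Qed.

End BoxProjection.

Section DRGradient.
Variables (R : realType) (n : nat) (f : 'rV[R]_n -> R).
Hypotheses (f_diff : forall z, in_cube z -> differentiable f z) (f_DR : DR_submodular f).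
Implicit Types (u v x y z : 'rV[R]_n).

Lemma DR_incr_le x y i d : in_cube x -> vle x y -> 0 <= d -> in_cube (y + d *: unitv R i) ->
  f (y + d *: unitv R i) - f y <= f (x + d *: unitv R i) - f x.
Proof.
move=> hx xy d0 hyd.
have y_yd : vle y (y + d *: unitv R i) by apply: vle_add_unitv => //; rewrite lerDl.
have hy := in_cube_vle_between hx hyd xy y_yd.
have x_xd : vle x (x + d *: unitv R i) by apply: vle_add_unitv => //; rewrite lerDl.
have hxd := in_cube_vle_between hx hyd x_xd (vle_add_unitv2 _ _ xy).
apply: f_DR => //; have := hx i; have := hyd i; have := xy i; rewrite add_unitvE eqxx.
by move=> *; apply/andP; lra.
Qed.

Lemma DR_partial_antitone_lt u v i : in_cube u -> in_cube v -> vle u v -> u 0 i < v 0 i ->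
  'D_(unitv R i) f v <= 'D_(unitv R i) f u.
Proof.
move=> hu hv uv uv_i.
apply: ler_cvg_to (derive_left_quotient (f_diff hv))
  (derive_right_quotient (diff_derivable (f_diff hu))) _.
near=> d; have d0 : 0 < d by near: d; exact: nbhs_right_gt.
have dv : d < v 0 i - u 0 i by near: d; apply: nbhs_right_lt; rewrite subr_gt0.
rewrite ler_pM2l ?invr_gt0 //.
have u_vd : vle u (v + (- d) *: unitv R i) by apply: vle_add_unitv => //; lra.
by have := DR_incr_le (i := i) hu u_vd (ltW d0); rewrite scaleNr subrK; apply.
Unshelve. all: end_near. Qed.

Lemma DR_partial_antitone_lt1 u v i : in_cube u -> in_cube v -> vle u v -> v 0 i < 1 ->
  'D_(unitv R i) f v <= 'D_(unitv R i) f u.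
Proof.
move=> hu hv uv v1.
apply: ler_cvg_to (derive_right_quotient (diff_derivable (f_diff hv)))
  (derive_right_quotient (diff_derivable (f_diff hu))) _.
near=> d; have d0 : 0 < d by near: d; exact: nbhs_right_gt.
have dv : d < 1 - v 0 i by near: d; apply: nbhs_right_lt; rewrite subr_gt0.
rewrite ler_pM2l ?invr_gt0 //; apply: DR_incr_le (ltW d0) _ => //.
by apply: in_cube_add_unitv => //; have := hv i; move=> ?; apply/andP; lra.
Unshelve. all: end_near. Qed.

Lemma DR_partial_antitone_gt0 u v i : in_cube u -> in_cube v -> vle u v -> 0 < u 0 i ->
  'D_(unitv R i) f v <= 'D_(unitv R i) f u.
Proof.
move=> hu hv uv u0.
apply: ler_cvg_to (derive_left_quotient (f_diff hv)) (derive_left_quotient (f_diff hu)) _.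
near=> d; have d0 : 0 < d by near: d; exact: nbhs_right_gt.
have du : d < u 0 i by near: d; exact: nbhs_right_lt.
rewrite ler_pM2l ?invr_gt0 //.
have hud : in_cube (u + (- d) *: unitv R i).
  by apply: in_cube_add_unitv => //; have := hu i; move=> ?; apply/andP; lra.
have := DR_incr_le (i := i) hud (vle_add_unitv2 _ _ uv) (ltW d0).
by rewrite scaleNr !subrK; apply.
Unshelve. all: end_near. Qed.

Lemma DR_grad_antitone u v : in_cube u -> in_cube v -> vle u v -> vle (grad f v) (grad f u).
Proof.
move=> hu hv uv i; rewrite !mxE.
have [u0|u0] := ltP 0 (u 0 i); first exact: DR_partial_antitone_gt0.
have [v1|v1] := ltP (v 0 i) 1; first exact: DR_partial_antitone_lt1.
by apply: DR_partial_antitone_lt => //; apply: le_lt_trans u0 (lt_le_trans ltr01 v1).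
Qed.

End DRGradient.

Section PointwiseBound.
Variable R : realFieldType.

Lemma mul_itv_ge (a b g p : R) : b <= 0 -> 0 <= a -> b <= g <= a -> b <= p <= a ->
  a * b <= g * p.
Proof.
move=> b0 a0 /andP[bg ga] /andP[bp pa].
have [g0|g0] := leP 0 g.
- by apply: le_trans (ler_wpM2l g0 bp); rewrite ler_wnM2r.
- by apply: le_trans (ler_wnM2l (ltW g0) pa); rewrite mulrC ler_wpM2r.
Qed.

Lemma grad_term_ge0 (A B g p : R) : B <= g <= A -> Num.min B 0 <= p <= Num.max A 0 ->
  0 <= 2^-1 * (A * Num.max A 0 + B * Num.min B 0) + g * p.
Proof.
move=> /andP[Bg gA] hp; set a := Num.max A 0; set b := Num.min B 0.
have -> : A * a = a * a by rewrite /a; case: (leP A 0) => A0; rewrite ?max_r ?max_l ?mulr0 // ltW.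
have -> : B * b = b * b by rewrite /b; case: (leP B 0) => B0; rewrite ?min_l ?min_r ?mulr0 // ltW.
have b0 : b <= 0 by rewrite ge_min lexx orbT.
have a0 : 0 <= a by rewrite le_max lexx orbT.
have bga : b <= g <= a by rewrite ge_min Bg le_max gA.
have := mul_itv_ge b0 a0 bga hp.
have := sqr_ge0 (a + b); nra.
Qed.

End PointwiseBound.

Theorem lemma5 (R : realType) (n : nat) (f : 'rV[R]_n -> R) (xstar : 'rV[R]_n)
  (a b : R) (x y : R -> 'rV[R]_n) :
  (forall z, in_cube z -> 0 <= f z) ->
  (forall z, in_cube z -> differentiable f z) ->
  DR_submodular f ->
  in_cube xstar -> (forall z, in_cube z -> f z <= f xstar) ->
  (forall t, a < t < b ->
     [/\ in_cube (x t), in_cube (y t) & vle (x t) (y t)] /\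
     [/\ derivable x t 1, derivable y t 1,
         derive1 x t = vpos (grad f (x t)) &
         derive1 y t = vneg (grad f (y t))]) ->
  forall t, a < t < b ->
    derivable (fun s => box_proj xstar (x s) (y s)) t 1 ->
    0 <= 2^-1 * (inner (grad f (x t)) (derive1 x t) + inner (grad f (y t)) (derive1 y t))
         + inner (grad f (box_proj xstar (x t) (y t)))
                 (derive1 (fun s => box_proj xstar (x s) (y s)) t).
Proof.
move=> _ f_diff f_DR _ _ traj t t_ab dp.
have [[hx hy xy] [dx dy ex ey]] := traj t t_ab.
have xp := vle_box_proj_l xstar xy; have py := vle_box_proj_r xstar (x t) (y t).
have hp := in_cube_vle_between hx hy xp py.
rewrite /inner -big_split mulr_sumr -big_split /=; apply: sumr_ge0 => i _.
have := derive1_box_proj_between (i := i) dx dy dp.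
rewrite ex ey !mxE le_max lexx orbT ge_min lexx orbT => /(_ isT isT) p_between.
apply: grad_term_ge0 p_between; apply/andP; split.
- by have := DR_grad_antitone f_diff f_DR hp hy py i; rewrite !mxE.
- by have := DR_grad_antitone f_diff f_DR hx hp xp i; rewrite !mxE.
Qed.
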